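(* Let $a<b$ be elements of $\mathcal{C}_n$ and let $N^{[a]}\left(\mathcal{STR}^{(n)}\{a,b\}\right)=\{a_\ell b_{n-\ell}:\ b+1\le\ell\le n\}$. Then $N^{[a]}\left(\mathcal{STR}^{(n)}\{a,b\}\right)$ is a subsemiring of $\mathcal{STR}^{(n)}\{a,b\}$, and it consists exactly of all $a$-nilpotent elements of $\mathcal{STR}^{(n)}\{a,b\}$, i.e. of all $\alpha\in\mathcal{STR}^{(n)}\{a,b\}$ with $\alpha^m=\overline{a}$ for some natural number $m$.
   Context: $\mathcal{C}_n=\{0,1,\dots,n-1\}$ with its usual order; $\widehat{\mathcal{E}}_{\mathcal{C}_n}$ is the set of all order-preserving maps $\mathcal{C}_n\to\mathcal{C}_n$ (not required to fix $0$), a semiring with $(\alpha+\beta)(x)=\max(\alpha(x),\beta(x))$ and $(\alpha\cdot\beta)(x)=\beta(\alpha(x))$. The string $\mathcal{STR}^{(n)}\{a,b\}$ is the set of $\alpha\in\widehat{\mathcal{E}}_{\mathcal{C}_n}$ with image in $\{a,b\}$; its elements are written $a_kb_{n-k}$ ($0\le k\le n$), the map sending $0,\dots,k-1$ to $a$ and $k,\dots,n-1$ to $b$; $\overline{a}=a_nb_0$ and $\overline{b}=a_0b_n$ are the constant maps. *)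

From mathcomp Require Import all_boot all_order.
Set Implicit Arguments. Unset Strict Implicit. Unset Printing Implicit Defensive.

(* C_n = 'I_n with its usual order; elements of \hat E_{C_n} are
   order-preserving maps, represented as finite functions. *)
Definition ordmap (n : nat) := {ffun 'I_n -> 'I_n}.

Definition order_preserving n (f : ordmap n) : Prop :=
  forall x y : 'I_n, x <= y -> f x <= f y.

Definition eadd n (f g : ordmap n) : ordmap n :=
  [ffun x => if f x <= g x then g x else f x].
Definition emul n (f g : ordmap n) : ordmap n := [ffun x => g (f x)].
Definition eone n : ordmap n := [ffun x => x].

Fixpoint epow n (f : ordmap n) (m : nat) : ordmap n :=
  match m with 0 => eone n | m'.+1 => emul (epow f m') f end.

Definition in_STR n (a b : 'I_n) (f : ordmap n) : Prop :=
  order_preserving f /\ (forall x, f x = a \/ f x = b).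

(* a_k b_{n-k} : sends 0..k-1 to a and k..n-1 to b *)
Definition str_elem n (a b : 'I_n) (k : nat) : ordmap n :=
  [ffun x : 'I_n => if (x : nat) < k then a else b].

Definition ebar n (a : 'I_n) : ordmap n := [ffun _ => a].

Definition Nset n (a b : 'I_n) (f : ordmap n) : Prop :=
  exists l : nat, (b.+1 <= l <= n) /\ f = str_elem a b l.

From mathcomp Require Import all_boot all_order.

Set Implicit Arguments.
Unset Strict Implicit.
Unset Printing Implicit Defensive.

(* Every element of STR{a,b} with a < b is some a_l b_{n-l}.  If l <= b then b
   is a fixed point of a_l b_{n-l}, so no power of it is the constant map a;
   if l > b, the map sends both a and b to a, so its square is already a.
   Sums of such maps are again of this form (with min l k), and products are a. *)

Lemma emul1f n (f : ordmap n) : emul (eone n) f = f.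
Proof. by apply/ffunP=> x; rewrite !ffunE. Qed.

Lemma epow_fix n (f : ordmap n) x : f x = x -> forall m, epow f m x = x.
Proof. by move=> fx; elim=> [|m IH] /=; rewrite ffunE ?IH. Qed.

Section Strings.

Variables (n : nat) (a b : 'I_n).

Lemma str_elem_in_STR l : a <= b -> in_STR a b (str_elem a b l).
Proof.
move=> ab; split=> [x y xy|x]; rewrite !ffunE; last by case: ifP; [left|right].
case: (ltnP y l) => [yl|_]; first by rewrite (leq_ltn_trans xy yl).
by case: ifP.
Qed.

Lemma eadd_str_elem l k :
  a <= b -> eadd (str_elem a b l) (str_elem a b k) = str_elem a b (minn l k).
Proof.
move=> ab; apply/ffunP=> x; rewrite !ffunE leq_min.
case: (ltnP x l); case: (ltnP x k) => //=; rewrite ?leqnn ?ab //.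
by case: ifP => // ba _ _; apply/val_inj/anti_leq; rewrite ab ba.
Qed.

Lemma str_elem_ebar : str_elem a b n = ebar a.
Proof. by apply/ffunP=> x; rewrite !ffunE ltn_ord. Qed.

Lemma emul_str_elem_ebar (f : ordmap n) k :
  a <= b -> b < k -> (forall x, f x = a \/ f x = b) ->
  emul f (str_elem a b k) = ebar a.
Proof.
move=> ab bk fab; apply/ffunP=> x; rewrite !ffunE.
by case: (fab x) => ->; rewrite ?bk ?(leq_ltn_trans ab bk).
Qed.

Lemma epow_str_elem_b l m : l <= b -> epow (str_elem a b l) m b = b.
Proof. by move=> lb; apply: epow_fix; rewrite ffunE ltnNge lb. Qed.

Lemma in_STR_str_elem (f : ordmap n) :
  a < b -> in_STR a b f -> exists2 l, l <= n & f = str_elem a b l.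
Proof.
move=> ltab [fmon fab].
pose not_a k := if insub k is Some x then f x != a else true.
have not_a_n : not_a n by rewrite /not_a insubN ?ltnn.
case: (ex_minnP (ex_intro not_a n not_a_n)) => l not_a_l l_min.
exists l; first exact: l_min.
apply/ffunP=> x; rewrite ffunE; case: ifP => [xl|/negbT].
  apply/eqP; apply: contraLR xl => fxa; rewrite -leqNgt l_min //.
  by rewrite /not_a valK.
rewrite -leqNgt => lx; have ln : l < n := leq_ltn_trans lx (ltn_ord x).
have flb : f (Ordinal ln) = b.
  by move: not_a_l; rewrite /not_a insubT /=; case: (fab (Ordinal ln)) => ->;
    rewrite ?eqxx.
case: (fab x) => // fxa; have := fmon (Ordinal ln) x lx.
by rewrite flb fxa leqNgt ltab.
Qed.

End Strings.

Theorem proposition9 (n : nat) (a b : 'I_n) (hab : a < b) :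
  ((forall f, Nset a b f -> in_STR a b f) /\
   (forall f g, Nset a b f -> Nset a b g -> Nset a b (eadd f g)) /\
   (forall f g, Nset a b f -> Nset a b g -> Nset a b (emul f g))) /\
  (forall f, in_STR a b f -> (Nset a b f <-> exists m : nat, epow f m = ebar a)).
Proof.
have ab := ltnW hab; split; [split; [|split]|].
- by move=> f [l [_ ->]]; apply: str_elem_in_STR.
- move=> _ _ [l [/andP [bl ln] ->]] [k [/andP [bk _] ->]].
  exists (minn l k); rewrite eadd_str_elem //.
  by rewrite leq_min bl bk geq_min ln.
- move=> _ _ [l [_ ->]] [k [/andP [bk _] ->]].
  exists n; rewrite ltn_ord leqnn str_elem_ebar emul_str_elem_ebar //.
  by case: (str_elem_in_STR l ab).
move=> f fSTR; have [l ln fl] := in_STR_str_elem hab fSTR; split.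
- move=> [k [/andP [bk _] ->]]; exists 2.
  by rewrite /= emul1f emul_str_elem_ebar //; case: (str_elem_in_STR k ab).
move=> [m fm]; exists l; rewrite ln andbT; split=> //.
rewrite ltnNge; apply/negP => lb; have := epow_str_elem_b a m lb.
by rewrite -fl fm ffunE => ba; rewrite ba ltnn in hab.
Qed.
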